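(* Let $\mathcal A$ be a well-structured abstract domain with functions $(\alpha,\gamma)$, and let monotone abstract operators $\llbracket e\rrbracket^\#:\mathcal A\to\mathcal A$ be given for each basic command $e$. If $\llbracket e\rrbracket^\#$ is a complete abstraction of $\llbracket e\rrbracket$ for every basic command $e$, then the induced incorrectness proof system described in the context is sound and relatively complete: for all $a,b\in\mathcal A$ and programs $S$, $\vdash_{\mathrm{in}}[a]\,S\,[b]$ iff $\models_{\mathrm{in}}[a]\,S\,[b]$.
   Context: Fix a finite set $V$ of quantum variables, each a qubit with state space $\mathcal H_q\cong\mathbb C^2$; for $W\subseteq V$, $\mathcal H_W=\bigotimes_{q\in W}\mathcal H_q$. Operators and subspaces on $\mathcal H_W$ are identified with their cylindrical extensions to $\mathcal H_V$, and a subspace is identified with its orthogonal projector; $P^\perp$ is the orthocomplement. $\mathcal D(\mathcal H_V)$ is the set of partial density operators (positive, trace $\le1$). Programs: $S::=\mathbf{skip}\mid \bar q:=|0\rangle\mid \bar q\mathrel{*{=}}U\mid \mathbf{assert}\ P[\bar q]\mid S_0;S_1\mid \mathbf{if}\ P[\bar q]\ \mathbf{then}\ S_1\ \mathbf{else}\ S_0\ \mathbf{end}\mid\mathbf{while}\ P[\bar q]\ \mathbf{do}\ S\ \mathbf{end}$, with $\bar q=q_1,\dots,q_t$ distinct variables, $U$ unitary on $\mathcal H_{\bar q}$, $P$ a subspace of $\mathcal H_{\bar q}$; the first four forms are the basic commands. Semantics $\llbracket S\rrbracket:\mathcal D(\mathcal H_V)\to\mathcal D(\mathcal H_V)$: $\llbracket\mathbf{skip}\rrbracket(\rho)=\rho$;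 $\llbracket\bar q:=|0\rangle\rrbracket(\rho)=\sum_{i=0}^{2^t-1}|0\rangle_{\bar q}\langle i|\rho|i\rangle_{\bar q}\langle0|$; $\llbracket\bar q\mathrel{*{=}}U\rrbracket(\rho)=U\rho U^\dagger$; $\llbracket\mathbf{assert}\ P[\bar q]\rrbracket(\rho)=P\rho P$; $\llbracket S_0;S_1\rrbracket=\llbracket S_1\rrbracket\circ\llbracket S_0\rrbracket$; $\llbracket\mathbf{if}\ P[\bar q]\ \mathbf{then}\ S_1\ \mathbf{else}\ S_0\ \mathbf{end}\rrbracket(\rho)=\llbracket\mathbf{assert}\ P[\bar q];S_1\rrbracket(\rho)+\llbracket\mathbf{assert}\ P^\perp[\bar q];S_0\rrbracket(\rho)$; $\llbracket\mathbf{while}\ P[\bar q]\ \mathbf{do}\ S\ \mathbf{end}\rrbracket(\rho)=\sum_{i\ge0}\llbracket(\mathbf{assert}\ P[\bar q];S)^i;\mathbf{assert}\ P^\perp[\bar q]\rrbracket(\rho)$, where $T^i$ is $i$-fold sequential composition ($T^0=\mathbf{skip}$). The concrete domain is $\mathcal Q=2^{\mathcal D(\mathcal H_V)}$ ordered by inclusion, and $\llbracket S\rrbracket(R)=\{\llbracket S\rrbracket(\rho):\rho\in R\}$. A pair of monotone maps $(\alpha,\gamma)$ between posets is a Galois connection if $c\le\gamma(a)\iff\alpha(c)\le a$, and a Galois embedding if moreover $\alpha\circ\gamma=\mathrm{id}$. A complete lattice $(\mathcal A,\le_{\mathcal A},\vee,\wedge,\bot,\top)$ with monotone $\alpha:\mathcal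 Q\to\mathcal A$, $\gamma:\mathcal A\to\mathcal Q$ is a well-structured abstract domain if (a) $(\alpha,\gamma)$ is a Galois embedding, and (b) for any family $\rho_i\in\mathcal D(\mathcal H_V)$ and reals $x_i>0$ with $\sum_i x_i\rho_i\in\mathcal D(\mathcal H_V)$, $\alpha(\sum_i x_i\rho_i)=\bigvee_i\alpha(\rho_i)$, where $\alpha(\rho)=\alpha(\{\rho\})$. $f^\#$ is a complete abstraction of $f:\mathcal Q\to\mathcal Q$ if $\alpha\circ f=f^\#\circ\alpha$. The best abstraction of $\llbracket S\rrbracket$ is $\llbracket S\rrbracket^b=\alpha\circ\llbracket S\rrbracket\circ\gamma$. Induced incorrectness system: assertions are elements of $\mathcal A$; $\models_{\mathrm{in}}[a]\,S\,[b]$ iff $b\le_{\mathcal A}\llbracket S\rrbracket^b(a)$. Derivability $\vdash_{\mathrm{in}}$ is w.r.t. the rules: (Exp-In) $[a]\,e\,[\llbracket e\rrbracket^\#(a)]$ for every basic command $e$; (Seq-In) from $[a]\,S_0\,[a']$ and $[a']\,S_1\,[b]$ infer $[a]\,S_0;S_1\,[b]$; (Imp-In) from $a'\le_{\mathcal A}a$, $[a']\,S\,[b']$, $b\le_{\mathcal A}b'$ infer $[a]\,S\,[b]$; (Meas-In) from $[a]\,\mathbf{assert}\ P[\bar q];S_1\,[b_1]$ and $[a]\,\mathbf{assert}\ P^\perp[\bar q];S_0\,[b_0]$ infer $[a]\,\mathbf{if}\ P[\bar q]\ \mathbf{then}\ S_1\ \mathbf{else}\ S_0\ \mathbf{end}\,[b_0\vee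 b_1]$; (While-In) from $[a_i]\,\mathbf{assert}\ P[\bar q];S\,[a_{i+1}]$ and $[a_i]\,\mathbf{assert}\ P^\perp[\bar q]\,[b_i]$ for all $i\ge0$ infer $[a_0]\,\mathbf{while}\ P[\bar q]\ \mathbf{do}\ S\ \mathbf{end}\,[\bigvee_{i\ge0}b_i]$. *)

From HB Require Import structures.
From mathcomp Require Import all_boot all_order all_algebra.
From mathcomp Require Import all_classical all_reals all_analysis.
From mathcomp Require Import complex.
Import Order.TTheory GRing.Theory Num.Theory.
Import numFieldNormedType.Exports.

Set Implicit Arguments.
Unset Strict Implicit.
Unset Printing Implicit Defensive.

Local Open Scope ring_scope.
Local Open Scope classical_set_scope.

(* Hilbert spaces.  R : realType, scalars C := R[i].  V : finType is the set *)
(* of qubit variables.  The computational basis of H_V = (C^2)^{(x) V} is   *)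
(* indexed by the finite type  {ffun V -> bool}; operators on H_V are square *)
(* matrices indexed by 'I_#|{ffun V -> bool}| (via enum_val / enum_rank).    *)
(* For a list of distinct variables qs = q_1,...,q_t, H_qs = (C^2)^{(x) t}   *)
(* has basis {ffun 'I_t -> bool} (component k <-> qubit q_(k+1)).            *)

Section Quantum.
Variable R : realType.
Local Notation C := R[i].
Variable V : finType.

Definition basis := {ffun V -> bool}.
Definition dimV := #|{: basis}|.
Definition Op := 'M[C]_dimV.

Definition lbasis (qs : seq V) := {ffun 'I_(size qs) -> bool}.
Definition ldim (qs : seq V) := #|{: lbasis qs}|.
Definition LOp (qs : seq V) := 'M[C]_(ldim qs).

Definition adjmx m n (A : 'M[C]_(m, n)) : 'M[C]_(n, m) :=
  (map_mx (fun z : C => z^*) A)^T.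

Definition restr (qs : seq V) (x : basis) : lbasis qs :=
  [ffun k => x (tnth (in_tuple qs) k)].

(* cylindrical extension  A (x) I_{V \ qs}  of an operator on H_qs *)
Definition cyl (qs : seq V) (A : LOp qs) : Op :=
  \matrix_(i, j)
    (let x := (enum_val i : basis) in let y := (enum_val j : basis) in
     if [forall v, (v \notin qs) ==> (x v == y v)]
     then A (enum_rank (restr qs x)) (enum_rank (restr qs y)) else 0).

(* orthocomplement of a subspace (given by its projector) of H_qs *)
Definition perp (qs : seq V) (P : LOp qs) : LOp qs := 1%:M - P.

Definition ketbra0 (qs : seq V) (k : lbasis qs) : LOp qs :=
  \matrix_(i, j)
    ((enum_val i == [ffun => false] :> lbasis qs) && (enum_val j == k))%:R.

Definition is_unitary n (U : 'M[C]_n) := U *m adjmx U = 1%:M /\ adjmx U *m U = 1%:M.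
Definition is_projector n (P : 'M[C]_n) := P *m P = P /\ adjmx P = P.

Definition is_psd n (A : 'M[C]_n) := forall v : 'cV[C]_n, 0 <= (adjmx v *m A *m v) 0 0.
Definition is_dens (rho : Op) := is_psd rho /\ \tr rho <= 1.

Definition partial_sum (f : nat -> Op) (n : nat) : Op := \sum_(k < n) f k.
Definition op_hassum (f : nat -> Op) (s : Op) :=
  forall i j,
    (fun n => complex.Re (partial_sum f n i j)) @ \oo --> complex.Re (s i j) /\
    (fun n => complex.Im (partial_sum f n i j)) @ \oo --> complex.Im (s i j).
Definition op_series (f : nat -> Op) : Op :=
  \matrix_(i, j) ((limn (fun n => complex.Re (partial_sum f n i j))) +i*
                  (limn (fun n => complex.Im (partial_sum f n i j))))%C.

Inductive bcmd : Type :=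
  | BSkip
  | BInit (qs : seq V)
  | BUnit (qs : seq V) (U : LOp qs)
  | BAssert (qs : seq V) (P : LOp qs).

Inductive prog : Type :=
  | Basic (e : bcmd)
  | PSeq (S0 S1 : prog)
  | PIf (qs : seq V) (P : LOp qs) (S1 S0 : prog)
  | PWhile (qs : seq V) (P : LOp qs) (S : prog).

Definition wf_qs (qs : seq V) := uniq qs /\ (0 < size qs)%N.

Definition wf_bcmd (e : bcmd) : Prop :=
  match e with
  | BSkip => True
  | BInit qs => wf_qs qs
  | BUnit qs U => wf_qs qs /\ is_unitary U
  | BAssert qs P => wf_qs qs /\ is_projector P
  end.

Fixpoint wf_prog (S : prog) : Prop :=
  match S with
  | Basic e => wf_bcmd e
  | PSeq S0 S1 => wf_prog S0 /\ wf_prog S1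
  | PIf qs P S1 S0 => (wf_qs qs /\ is_projector P) /\ wf_prog S1 /\ wf_prog S0
  | PWhile qs P Sb => (wf_qs qs /\ is_projector P) /\ wf_prog Sb
  end.

Definition assert_sem (qs : seq V) (P : LOp qs) (rho : Op) : Op :=
  cyl P *m rho *m cyl P.

Definition bsem (e : bcmd) (rho : Op) : Op :=
  match e with
  | BSkip => rho
  | BInit qs => \sum_(k : lbasis qs)
                 cyl (ketbra0 k) *m rho *m adjmx (cyl (ketbra0 k))
  | BUnit qs U => cyl U *m rho *m adjmx (cyl U)
  | BAssert qs P => assert_sem P rho
  end.

Fixpoint sem (S : prog) (rho : Op) : Op :=
  match S with
  | Basic e => bsem e rho
  | PSeq S0 S1 => sem S1 (sem S0 rho)
  | PIf qs P S1 S0 => sem S1 (assert_sem P rho) + sem S0 (assert_sem (perp P) rho)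
  | PWhile qs P Sb =>
      op_series (fun i =>
        assert_sem (perp P) (iter i (fun r => sem Sb (assert_sem P r)) rho))
  end.

Definition sem_set (S : prog) (X : set Op) : set Op := (sem S) @` X.

(* elements of the concrete domain: sets of partial density operators *)
Definition in_Q (X : set Op) := X `<=` is_dens.

End Quantum.

Definition is_complete_lattice (A : Type) (le : A -> A -> Prop)
    (sup : set A -> A) : Prop :=
  [/\ (forall a, le a a),
      (forall a b c, le a b -> le b c -> le a c),
      (forall a b, le a b -> le b a -> a = b),
      (forall (X : set A) a, X a -> le a (sup X)) &
      (forall (X : set A) b, (forall a, X a -> le a b) -> le (sup X) b)].

Section Abstract.
Variable R : realType.
Variable V : finType.
Local Notation Op := (Op R V).
Variable A : Type.
Variables (le : A -> A -> Prop) (sup : set A -> A).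
Variables (alpha : set Op -> A) (gamma : A -> set Op).

Definition join (a b : A) : A := sup [set a; b].

Definition galois_embedding : Prop :=
  [/\ (forall X Y, in_Q X -> in_Q Y -> X `<=` Y -> le (alpha X) (alpha Y)),
      (forall a b, le a b -> gamma a `<=` gamma b),
      (forall a, in_Q (gamma a)),
      (forall X a, in_Q X -> (X `<=` gamma a <-> le (alpha X) a)) &
      (forall a, alpha (gamma a) = a)].

(* condition (b): alpha (sum_i x_i rho_i) = \/_i alpha(rho_i) for every
   (finite or countably infinite, possibly empty) family: the family is
   encoded as fam : nat -> option (R * Op), the members being the Some's. *)
Definition fam_term (fam : nat -> option (R * Op)) (n : nat) : Op :=
  match fam n with Some (x, rho) => x%:C%C *: rho | None => 0 end.

Definition alpha_additive : Prop :=
  forall (fam : nat -> option (R * Op)) (s : Op),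
    (forall n x rho, fam n = Some (x, rho) -> 0 < x /\ is_dens rho) ->
    op_hassum (fam_term fam) s ->
    is_dens s ->
    alpha [set s] = sup [set alpha [set rho] | rho in
                           [set rho | exists n x, fam n = Some (x, rho)]].

Definition well_structured : Prop :=
  [/\ is_complete_lattice le sup, galois_embedding & alpha_additive].

Definition complete_abstraction (f : set Op -> set Op) (fs : A -> A) : Prop :=
  forall X, in_Q X -> alpha (f X) = fs (alpha X).

Definition best_abs (S : prog R V) (a : A) : A := alpha (sem_set S (gamma a)).

Definition valid_in (a : A) (S : prog R V) (b : A) : Prop := le b (best_abs S a).

Variable fsharp : bcmd R V -> A -> A.

Inductive derivable_in : A -> prog R V -> A -> Prop :=
  | ExpIn (e : bcmd R V) (a : A) :
      derivable_in a (Basic e) (fsharp e a)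
  | SeqIn (a a' b : A) (S0 S1 : prog R V) :
      derivable_in a S0 a' -> derivable_in a' S1 b ->
      derivable_in a (PSeq S0 S1) b
  | ImpIn (a a' b b' : A) (S : prog R V) :
      le a' a -> derivable_in a' S b' -> le b b' ->
      derivable_in a S b
  | MeasIn (a b0 b1 : A) (qs : seq V) (P : LOp R qs) (S1 S0 : prog R V) :
      derivable_in a (PSeq (Basic (BAssert P)) S1) b1 ->
      derivable_in a (PSeq (Basic (BAssert (perp P))) S0) b0 ->
      derivable_in a (PIf P S1 S0) (join b0 b1)
  | WhileIn (as_ bs : nat -> A) (qs : seq V) (P : LOp R qs) (S : prog R V) :
      (forall i, derivable_in (as_ i) (PSeq (Basic (BAssert P)) S) (as_ i.+1)) ->
      (forall i, derivable_in (as_ i) (Basic (BAssert (perp P))) (bs i)) ->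
      derivable_in (as_ 0%N) (PWhile P S) (sup (range bs)).

End Abstract.

(* Both directions rest on one fact: the best abstraction alpha o [[S]] o gamma
   of every program is complete. For basic commands this is the hypothesis; it
   is preserved by sequencing, and by branching and loops because condition (b)
   turns the output of [if] (the sum of its two branches) and of [while] (the
   series over its unrollings) into the join of the abstractions of the
   summands. Hence the best abstraction of a compound program is computed from
   those of its parts exactly as the rules Seq-In, Meas-In and While-In
   prescribe, so the best postcondition is derivable and every derivable
   postcondition lies below it.
   Applying (b) requires that programs map partial density operators to
   partial density operators and that the loop series converges: its partial
   sums are positive semidefinite with trace bounded by that of the input, so
   they converge by monotone convergence of the quadratic forms and
   polarization. *)

From Pilot Require Import Defs.
From HB Require Import structures.
From mathcomp Require Import all_boot all_order all_algebra.
From mathcomp Require Import all_classical all_reals all_analysis.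
From mathcomp Require Import complex.
From mathcomp Require Import ring lra.
Import Order.TTheory GRing.Theory Num.Theory.
Import numFieldNormedType.Exports.

Set Implicit Arguments.
Unset Strict Implicit.
Unset Printing Implicit Defensive.

Local Open Scope ring_scope.
Local Open Scope classical_set_scope.

Section Adjoint.
Variable R : realType.
Local Notation C := R[i].

Lemma adjmxE m n (A : 'M[C]_(m, n)) i j : adjmx A i j = ((A j i)^*)%C.
Proof. by rewrite /adjmx !mxE. Qed.

Lemma adjmxK m n (A : 'M[C]_(m, n)) : adjmx (adjmx A) = A.
Proof. by apply/matrixP=> i j; rewrite !adjmxE conjcK. Qed.

Lemma adjmxM m n p (A : 'M[C]_(m, n)) (B : 'M[C]_(n, p)) :
  adjmx (A *m B) = adjmx B *m adjmx A.
Proof. by rewrite /adjmx map_mxM trmx_mul. Qed.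

Lemma adjmxD m n (A B : 'M[C]_(m, n)) : adjmx (A + B) = adjmx A + adjmx B.
Proof. by apply/matrixP=> i j; rewrite !(mxE, adjmxE) rmorphD. Qed.

Lemma adjmxN m n (A : 'M[C]_(m, n)) : adjmx (- A) = - adjmx A.
Proof. by apply/matrixP=> i j; rewrite !(mxE, adjmxE) rmorphN. Qed.

Lemma adjmxB m n (A B : 'M[C]_(m, n)) : adjmx (A - B) = adjmx A - adjmx B.
Proof. by rewrite adjmxD adjmxN. Qed.

Lemma adjmxZ m n (c : C) (A : 'M[C]_(m, n)) : adjmx (c *: A) = (c^*)%C *: adjmx A.
Proof. by apply/matrixP=> i j; rewrite !(mxE, adjmxE) rmorphM. Qed.

Lemma adjmx1 n : adjmx (1%:M : 'M[C]_n) = 1%:M.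
Proof.
by apply/matrixP=> i j; rewrite adjmxE !mxE eq_sym; case: eqP; rewrite ?conjc1 ?conjc0.
Qed.

Lemma adjmx_delta m n (a : 'I_m) (b : 'I_n) :
  adjmx (delta_mx a b : 'M[C]_(m, n)) = delta_mx b a.
Proof.
apply/matrixP=> i j; rewrite adjmxE !mxE.
by case: (j == a); case: (i == b); rewrite ?conjc1 ?conjc0.
Qed.

End Adjoint.

Section PositiveSemidefinite.
Variable R : realType.
Local Notation C := R[i].
Variable n : nat.
Implicit Types (M A B K : 'M[C]_n) (v : 'cV[C]_n).

Definition qform v M := (adjmx v *m M *m v) 0 0.

Lemma qformD v A B : qform v (A + B) = qform v A + qform v B.
Proof. by rewrite /qform mulmxDr mulmxDl mxE. Qed.

Lemma qform_conj v K M : qform v (K *m M *m adjmx K) = qform (adjmx K *m v) M.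
Proof. by rewrite /qform adjmxM adjmxK !mulmxA. Qed.

Lemma qform_delta i M : qform (delta_mx i 0) M = M i i.
Proof. by rewrite /qform adjmx_delta -rowE -colE !mxE. Qed.

Lemma psd_qform_ge0 M v : is_psd M -> 0 <= qform v M.
Proof. by move=> HM; apply: HM. Qed.

Lemma psd_conj K M : is_psd M -> is_psd (K *m M *m adjmx K).
Proof. by move=> HM v; rewrite -[X in 0 <= X]/(qform v _) qform_conj; apply: HM. Qed.

Lemma psd0 : is_psd (0 : 'M[C]_n).
Proof. by move=> v; rewrite mulmx0 mul0mx mxE. Qed.

Lemma psdD A B : is_psd A -> is_psd B -> is_psd (A + B).
Proof.
move=> HA HB v; rewrite -[X in 0 <= X]/(qform v _) qformD.
by apply: addr_ge0; [apply: HA | apply: HB].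
Qed.

Lemma psd_sum (I : finType) (F : I -> 'M[C]_n) :
  (forall i, is_psd (F i)) -> is_psd (\sum_i F i).
Proof. by move=> HF; apply: (big_ind (@is_psd R n)) => //; [exact: psd0 | exact: psdD]. Qed.

Lemma psd_diag_ge0 M i : is_psd M -> 0 <= M i i.
Proof. by move=> HM; rewrite -qform_delta; apply: HM. Qed.

Lemma psd_mxtrace_ge0 M : is_psd M -> 0 <= \tr M.
Proof. by move=> HM; rewrite sumr_ge0 // => i _; apply: psd_diag_ge0. Qed.

Lemma mxtrace_sum (I : finType) (F : I -> 'M[C]_n) : \tr (\sum_i F i) = \sum_i \tr (F i).
Proof. exact: raddf_sum. Qed.

Lemma mxtrace_conj K M : \tr (K *m M *m adjmx K) = \tr (adjmx K *m K *m M).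
Proof. by rewrite mxtrace_mulC mulmxA. Qed.

End PositiveSemidefinite.

Section CylindricalExtension.
Variable R : realType.
Local Notation C := R[i].
Variable V : finType.
Local Notation basis := (Defs.basis V).
Local Notation Op := (Op R V).
Variable qs : seq V.
Hypothesis qs_uniq : uniq qs.

Lemma matrix_basisP (M N : Op) :
  (forall x y : basis, M (enum_rank x) (enum_rank y) = N (enum_rank x) (enum_rank y)) ->
  M = N.
Proof. by move=> H; apply/matrixP=> i j; rewrite -(enum_valK i) -(enum_valK j) H. Qed.

Definition agree (x y : basis) := [forall v, (v \notin qs) ==> (x v == y v)].

Lemma agree_refl x : agree x x.
Proof. by apply/forallP=> v; rewrite eqxx implybT. Qed.

Lemma agreeC x y : agree x y = agree y x.
Proof. by apply/forallP/forallP=> H v; rewrite eq_sym; apply: H. Qed.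

Lemma agree_trans x y z : agree x y -> agree y z -> agree x z.
Proof.
move=> /forallP Hxy /forallP Hyz; apply/forallP=> v; apply/implyP=> Hv.
by rewrite (eqP (implyP (Hxy v) Hv)) (implyP (Hyz v) Hv).
Qed.

Lemma cylE (A : LOp R qs) x y :
  cyl A (enum_rank x) (enum_rank y) =
  if agree x y then A (enum_rank (restr qs x)) (enum_rank (restr qs y)) else 0.
Proof. by rewrite mxE !enum_rankK. Qed.

Definition extend (x : basis) (k : lbasis qs) : basis :=
  [ffun v => if insub (index v qs) is Some o then k o else x v].

Lemma restr_extend x k : restr qs (extend x k) = k.
Proof.
apply/ffunP=> w; rewrite !ffunE (tnth_nth (tnth (in_tuple qs) w)) /= index_uniq //.
by rewrite (insubT (fun i => i < size qs)%N (ltn_ord w)) /=; congr (k _); apply: val_inj.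
Qed.

Lemma agree_extend x k : agree x (extend x k).
Proof.
apply/forallP=> v; apply/implyP=> Hv.
by rewrite ffunE insubF // index_mem (negPf Hv).
Qed.

Lemma extend_restr x z : agree x z -> extend x (restr qs z) = z.
Proof.
move=> /forallP Hxz; apply/ffunP=> v; rewrite ffunE.
case: insubP => [w Hw Hv | ].
  by rewrite ffunE (tnth_nth v) /= Hv nth_index // -index_mem.
by rewrite index_mem => /negbTE Hv; apply/eqP; have := Hxz v; rewrite Hv.
Qed.

Lemma restr_inj x y : agree x y -> restr qs x = restr qs y -> x = y.
Proof.
by move=> Hxy Hr; rewrite -(extend_restr Hxy) -Hr extend_restr // agree_refl.
Qed.

Lemma sum_agree x (F : lbasis qs -> C) :
  \sum_(z | agree x z) F (restr qs z) = \sum_k F k.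
Proof.
rewrite (reindex (extend x)) /=.
  by apply: eq_big => k; rewrite ?agree_extend // => _; rewrite restr_extend.
by exists (restr qs) => k Hk; rewrite ?restr_extend ?extend_restr.
Qed.

Lemma sum_enum_rank (T : finType) (F : 'I_#|T| -> C) :
  \sum_k F k = \sum_(z : T) F (enum_rank z).
Proof.
rewrite (reindex (@enum_rank T)) //.
by exists enum_val => z _; rewrite ?enum_rankK ?enum_valK.
Qed.

Lemma cylM (A B : LOp R qs) : cyl (A *m B) = cyl A *m cyl B.
Proof.
apply: matrix_basisP => x y; rewrite cylE [RHS]mxE sum_enum_rank.
under eq_bigr do rewrite !cylE.
case: (boolP (agree x y)) => Hxy; last first.
  rewrite big1 // => z _.
  case: (boolP (agree x z)) => Hxz; last by rewrite mul0r.
  case: (boolP (agree z y)) => Hzy; last by rewrite mulr0.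
  by rewrite (agree_trans Hxz Hzy) in Hxy.
rewrite (bigID (agree x)) /= [X in _ + X]big1 ?addr0; last first.
  by move=> z /negPf ->; rewrite mul0r.
have Hzy z : agree x z -> agree z y by rewrite agreeC => /agree_trans; apply.
under eq_bigr => z Hz do rewrite Hz (Hzy z Hz).
by rewrite mxE sum_enum_rank -(sum_agree x (fun k => A _ (enum_rank k) * B (enum_rank k) _)).
Qed.

Lemma cylD (A B : LOp R qs) : cyl (A + B) = cyl A + cyl B.
Proof.
by apply: matrix_basisP => x y; rewrite [RHS]mxE !cylE; case: agree; rewrite ?mxE ?addr0.
Qed.

Lemma cylN (A : LOp R qs) : cyl (- A) = - cyl A.
Proof.
by apply: matrix_basisP => x y; rewrite [RHS]mxE !cylE; case: agree; rewrite ?mxE ?oppr0.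
Qed.

Lemma cyl_sum (I : finType) (F : I -> LOp R qs) : cyl (\sum_i F i) = \sum_i cyl (F i).
Proof.
apply: (big_morph (@cyl R V qs)); first exact: cylD.
by apply: matrix_basisP => x y; rewrite cylE [RHS]mxE; case: agree; rewrite ?mxE.
Qed.

Lemma cyl1 : cyl (1%:M : LOp R qs) = 1%:M.
Proof.
apply: matrix_basisP => x y; rewrite cylE !mxE !(inj_eq enum_rank_inj).
case: (boolP (agree x y)) => Hxy.
  suff -> : (restr qs x == restr qs y) = (x == y) by [].
  by apply/eqP/eqP => [/(restr_inj Hxy) | ->].
by case: eqP => // Exy; rewrite Exy agree_refl in Hxy.
Qed.

Lemma cyl_adj (A : LOp R qs) : adjmx (cyl A) = cyl (adjmx A).
Proof.
apply: matrix_basisP => x y; rewrite adjmxE !cylE adjmxE agreeC.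
by case: agree; rewrite ?conjc0.
Qed.

End CylindricalExtension.

Section BasicCommands.
Variable R : realType.
Local Notation C := R[i].
Variable V : finType.
Local Notation Op := (Op R V).
Variable qs : seq V.
Hypothesis qs_uniq : uniq qs.

Lemma perp_projector (P : LOp R qs) : is_projector P -> is_projector (perp P).
Proof.
case=> PP adjP; split; rewrite /perp.
  by rewrite mulmxBl mul1mx mulmxBr mulmx1 PP subrr subr0.
by rewrite adjmxB adjmx1 adjP.
Qed.

Lemma cyl_perp (P : LOp R qs) : cyl (perp P) = 1%:M - cyl P.
Proof. by rewrite /perp cylD // cylN // cyl1. Qed.

Lemma cyl_projector (P : LOp R qs) : is_projector P -> is_projector (cyl P).
Proof. by case=> PP adjP; split; rewrite -?cylM ?cyl_adj ?PP ?adjP. Qed.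

Lemma assert_psd (P : LOp R qs) (rho : Op) :
  is_projector P -> is_psd rho -> is_psd (assert_sem P rho).
Proof.
by move=> /cyl_projector [_ adjP] Hrho; rewrite /assert_sem -{2}adjP; apply: psd_conj.
Qed.

Lemma mxtrace_assert (P : LOp R qs) (rho : Op) :
  is_projector P -> \tr (assert_sem P rho) = \tr (cyl P *m rho).
Proof. by move=> /cyl_projector [PP _]; rewrite /assert_sem mxtrace_mulC mulmxA PP. Qed.

Lemma mxtrace_assert_perp (P : LOp R qs) (rho : Op) : is_projector P ->
  \tr (assert_sem P rho) + \tr (assert_sem (perp P) rho) = \tr rho.
Proof.
move=> HP; rewrite (mxtrace_assert _ HP) (mxtrace_assert _ (perp_projector HP)) cyl_perp.
by rewrite mulmxBl mul1mx raddfB /= addrC subrK.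
Qed.

Lemma mxtrace_assert_le (P : LOp R qs) (rho : Op) :
  is_projector P -> is_psd rho -> \tr (assert_sem P rho) <= \tr rho.
Proof.
move=> HP Hrho; rewrite -(mxtrace_assert_perp rho HP) lerDl.
by apply/psd_mxtrace_ge0/assert_psd => //; apply: perp_projector.
Qed.

Lemma mxtrace_unitary (U : LOp R qs) (rho : Op) :
  Defs.is_unitary U -> \tr (cyl U *m rho *m adjmx (cyl U)) = \tr rho.
Proof. by case=> _ UU; rewrite mxtrace_conj cyl_adj // -cylM // UU cyl1 // mul1mx. Qed.

Lemma ketbra0E (k : lbasis qs) :
  ketbra0 R k = delta_mx (enum_rank [ffun => false]) (enum_rank k).
Proof.
have rankE (T : finType) (i : 'I_#|T|) (z : T) : (i == enum_rank z) = (enum_val i == z).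
  by apply/eqP/eqP => [->|<-]; rewrite ?enum_rankK ?enum_valK.
by apply/matrixP=> i j; rewrite !mxE !rankE.
Qed.

Lemma ketbra0_resolution : \sum_(k : lbasis qs) adjmx (ketbra0 R k) *m ketbra0 R k = 1%:M.
Proof.
under eq_bigr do rewrite ketbra0E adjmx_delta mul_delta_mx.
rewrite mx1_sum_delta (reindex (@enum_rank _)) //.
by exists enum_val => z _; rewrite ?enum_rankK ?enum_valK.
Qed.

Lemma init_psd (rho : Op) : is_psd rho -> is_psd (bsem (BInit R qs) rho).
Proof. by move=> Hrho; apply: psd_sum => k; apply: psd_conj. Qed.

Lemma mxtrace_init (rho : Op) : \tr (bsem (BInit R qs) rho) = \tr rho.
Proof.
rewrite /= mxtrace_sum.
under eq_bigr do rewrite mxtrace_conj cyl_adj // -cylM //.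
by rewrite -mxtrace_sum -mulmx_suml -cyl_sum // ketbra0_resolution cyl1 // mul1mx.
Qed.

End BasicCommands.

Section ComplexConvergence.
Variable R : realType.
Local Notation C := R[i].
Local Notation Re := (@complex.Re R).
Local Notation Im := (@complex.Im R).

Lemma ReD (x y : C) : Re (x + y) = Re x + Re y.
Proof. by case: x; case: y. Qed.

Lemma ImD (x y : C) : Im (x + y) = Im x + Im y.
Proof. by case: x; case: y. Qed.

Lemma ReM (x y : C) : Re (x * y) = Re x * Re y - Im x * Im y.
Proof. by case: x; case: y. Qed.

Lemma ImM (x y : C) : Im (x * y) = Re x * Im y + Im x * Re y.
Proof. by case: x; case: y. Qed.

Lemma Re_sum (I : Type) (r : seq I) (F : I -> C) :
  Re (\sum_(i <- r) F i) = \sum_(i <- r) Re (F i).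
Proof. by apply: (big_morph Re); [exact: ReD | ]. Qed.

Lemma Im_sum (I : Type) (r : seq I) (F : I -> C) :
  Im (\sum_(i <- r) F i) = \sum_(i <- r) Im (F i).
Proof. by apply: (big_morph Im); [exact: ImD | ]. Qed.

Definition cvgC (u : nat -> C) (z : C) :=
  Re (u m) @[m --> \oo] --> Re z /\ Im (u m) @[m --> \oo] --> Im z.

Lemma cvgC_sum (I : Type) (r : seq I) (u : I -> nat -> C) (z : I -> C) :
  (forall i, cvgC (u i) (z i)) ->
  cvgC (fun m => \sum_(i <- r) u i m) (\sum_(i <- r) z i).
Proof.
move=> uz; rewrite /cvgC Re_sum Im_sum.
under eq_cvg do rewrite Re_sum; under [X in _ /\ X]eq_cvg do rewrite Im_sum.
have sum_cvg (v : I -> nat -> R) (l : I -> R) : (forall i, v i m @[m --> \oo] --> l i) ->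
    \sum_(i <- r) v i m @[m --> \oo] --> \sum_(i <- r) l i.
  by move=> vl; apply: (cvg_big (P := xpredT) add_continuous) => // i _; exact: vl.
by split; apply: sum_cvg => i; [exact: (uz i).1 | exact: (uz i).2].
Qed.

Lemma cvgCMl (a : C) u z : cvgC u z -> cvgC (fun m => a * u m) (a * z).
Proof.
move=> [ReC ImC]; split.
  rewrite ReM; under eq_cvg do rewrite ReM.
  by apply: cvgB; apply: cvgMl_tmp.
rewrite ImM; under eq_cvg do rewrite ImM.
by apply: cvgD; apply: cvgMl_tmp.
Qed.

Lemma cvgC_ge u z c : cvgC u z -> (forall m, c <= u m) -> c <= z.
Proof.
move=> [ReC ImC] cu; rewrite lecE; apply/andP; split.
  apply/eqP; apply/le_anti/andP; split.
    by apply: (cvgr_to_le ImC); apply: nearW => m; have := cu m; rewrite lecE => /andP [/eqP ->].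
  by apply: (cvgr_to_ge ImC); apply: nearW => m; have := cu m; rewrite lecE => /andP [/eqP ->].
by apply: (cvgr_to_ge ReC); apply: nearW => m; have := cu m; rewrite lecE => /andP [].
Qed.

Lemma cvgC_le u z c : cvgC u z -> (forall m, u m <= c) -> z <= c.
Proof.
move=> [ReC ImC] cu; rewrite lecE; apply/andP; split.
  apply/eqP; apply/le_anti/andP; split.
    by apply: (cvgr_to_ge ImC); apply: nearW => m; have := cu m; rewrite lecE => /andP [/eqP ->].
  by apply: (cvgr_to_le ImC); apply: nearW => m; have := cu m; rewrite lecE => /andP [/eqP ->].
by apply: (cvgr_to_le ReC); apply: nearW => m; have := cu m; rewrite lecE => /andP [].
Qed.

End ComplexConvergence.

Section MatrixConvergence.
Variable R : realType.
Local Notation C := R[i].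
Variable n : nat.
Implicit Types (S : nat -> 'M[C]_n) (L M : 'M[C]_n) (v : 'cV[C]_n).

(* Chosen so that [op_hassum f s] is [mx_cvg (partial_sum f) s] by conversion. *)
Definition mx_cvg S L := forall i j, cvgC (fun m => S m i j) (L i j).

Lemma qform_expand v M : qform v M = \sum_l \sum_k ((v k 0)^*)%C * v l 0 * M k l.
Proof.
rewrite /qform mxE; apply: eq_bigr => l _; rewrite mxE big_distrl /=.
by apply: eq_bigr => k _; rewrite adjmxE mulrAC.
Qed.

Lemma cvgC_qform S L v : mx_cvg S L -> cvgC (fun m => qform v (S m)) (qform v L).
Proof.
move=> SL; rewrite qform_expand (funext (fun m => qform_expand v (S m))).
by do 2![apply: cvgC_sum => ?]; apply: cvgCMl.
Qed.

Lemma cvgC_mxtrace S L : mx_cvg S L -> cvgC (fun m => \tr (S m)) (\tr L).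
Proof. by move=> SL; apply: cvgC_sum => i. Qed.

Lemma psd_mx_cvg S L : mx_cvg S L -> (forall m, is_psd (S m)) -> is_psd L.
Proof.
move=> SL Spsd v; apply: (cvgC_ge (cvgC_qform v SL)) => m.
exact: psd_qform_ge0.
Qed.

End MatrixConvergence.

Section Polarization.
Variable R : realType.
Local Notation C := R[i].
Local Notation Re := (@complex.Re R).
Local Notation Im := (@complex.Im R).
Variable n : nat.
Implicit Types (M : 'M[C]_n).
Local Notation e i := (delta_mx i 0 : 'cV[C]_n).

Lemma qform_comb M i j (w : C) :
  qform (e i + w *: e j) M =
  M i i + w * M i j + (w^*)%C * M j i + (w^*)%C * w * M j j.
Proof.
have entryE k l : ((delta_mx 0 k : 'rV[C]_n) *m M *m (delta_mx l 0 : 'cV[C]_n)) 0 0 = M k l.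
  by rewrite -rowE -colE !mxE.
rewrite /qform adjmxD adjmxZ !adjmx_delta !(mulmxDl, mulmxDr) -!scalemxAl -!scalemxAr.
by rewrite !(entryE, mxE); ring.
Qed.

Lemma psd_polarization M i j : is_psd M ->
  Re (M i j) = (Re (qform (e i + 1 *: e j) M) - Re (M i i) - Re (M j j)) / 2 /\
  Im (M i j) = (Re (M i i) + Re (M j j) - Re (qform (e i + 'i%C *: e j) M)) / 2.
Proof.
move=> Mpsd; have := psd_qform_ge0 (e i + 1 *: e j) Mpsd.
have := psd_qform_ge0 (e i + 'i%C *: e j) Mpsd.
have := psd_diag_ge0 i Mpsd; have := psd_diag_ge0 j Mpsd.
rewrite !qform_comb.
move: (M i i) (M i j) (M j i) (M j j) => [a1 a2] [b1 b2] [c1 c2] [d1 d2].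
rewrite !lecE /= => /andP [/eqP ? ?] /andP [/eqP ? ?] /andP [/eqP ? ?] /andP [/eqP ? ?].
split; lra.
Qed.

(* The parallelogram identity with [e i - w e j] bounds the form at [e i + w e j]. *)
Lemma qform_unit_le M i j (w : C) : is_psd M -> (w^*)%C * w = 1 ->
  Re (qform (e i + w *: e j) M) <= 2 * (Re (M i i) + Re (M j j)).
Proof.
move=> Mpsd w1; have := psd_qform_ge0 (e i + (- w) *: e j) Mpsd.
have parallelogram : qform (e i + w *: e j) M + qform (e i + (- w) *: e j) M =
    (M i i + M i i) + (w^*)%C * w * (M j j + M j j).
  by rewrite !qform_comb rmorphN; ring.
rewrite w1 mul1r in parallelogram.
move: (congr1 Re parallelogram); rewrite !ReD lecE => + /andP [_ ?]; lra.
Qed.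

Lemma psd_diag_le_mxtrace M i : is_psd M -> Re (M i i) <= Re (\tr M).
Proof.
move=> Mpsd; rewrite /mxtrace Re_sum (bigD1 i) //= lerDl sumr_ge0 // => k _.
by have := psd_diag_ge0 k Mpsd; rewrite lecE => /andP [].
Qed.

End Polarization.

Section PsdSeries.
Variable R : realType.
Local Notation C := R[i].
Local Notation Re := (@complex.Re R).
Local Notation Im := (@complex.Im R).
Variable V : finType.
Local Notation Op := (Op R V).
Local Notation e i := (delta_mx i 0 : 'cV[C]_(dimV V)).

Lemma partial_sumS (f : nat -> Op) m : partial_sum f m.+1 = partial_sum f m + f m.
Proof. by rewrite /partial_sum big_ord_recr. Qed.

Lemma psd_partial_sum (f : nat -> Op) m :
  (forall k, is_psd (f k)) -> is_psd (partial_sum f m).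
Proof.
move=> fpsd; elim: m => [|m IH]; last by rewrite partial_sumS; apply: psdD.
by rewrite /partial_sum big_ord0; apply: psd0.
Qed.

(* The forms [Re (qform v (partial_sum f m))] are nondecreasing and, for the
   vectors used in polarization, bounded by the trace; by polarization every
   entry is a fixed combination of them. *)
Lemma psd_series_cvg (f : nat -> Op) (c : C) :
  (forall k, is_psd (f k)) -> (forall m, \tr (partial_sum f m) <= c) ->
  op_hassum f (op_series f).
Proof.
move=> fpsd trc; pose S := partial_sum f.
have Spsd m : is_psd (S m) := psd_partial_sum m fpsd.
have cvgn_form v (b : R) : (forall m, Re (qform v (S m)) <= b) ->
    cvgn (fun m => Re (qform v (S m))).
  move=> Sb; apply: nondecreasing_is_cvgn; last by exists b => _ [m _ <-].
  apply/nondecreasing_seqP => m; rewrite /S partial_sumS qformD ReD lerDl.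
  by have := psd_qform_ge0 v (fpsd m); rewrite lecE => /andP [].
have diag_le i m : Re (S m i i) <= Re c.
  apply: le_trans (psd_diag_le_mxtrace i (Spsd m)) _.
  by have := trc m; rewrite lecE => /andP [].
have cvgn_diag i : cvgn (fun m => Re (S m i i)).
  under eq_fun do rewrite -qform_delta.
  by apply: (cvgn_form _ (Re c)) => m; rewrite qform_delta.
have cvgn_unit i j (w : C) : (w^*)%C * w = 1 -> cvgn (fun m => Re (qform (e i + w *: e j) (S m))).
  move=> w1; apply: (cvgn_form _ (2 * (Re c + Re c))) => m.
  by apply: le_trans (qform_unit_le i j (Spsd m) w1) _; rewrite ler_pM2l // lerD.
have conjii : (('i%C : C)^*)%C * 'i%C = 1.
  by apply/eqP; rewrite eq_complex /=; apply/andP; split; apply/eqP; ring.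
have cvgn_Re i j : cvgn (fun m => Re (S m i j)).
  under eq_fun do rewrite (psd_polarization i j (Spsd _)).1.
  apply: cvgP; apply: cvgMr_tmp; apply: cvgB; first apply: cvgB.
  - by apply: cvgn_unit; rewrite conjc1 mulr1.
  - exact: cvgn_diag.
  - exact: cvgn_diag.
have cvgn_Im i j : cvgn (fun m => Im (S m i j)).
  under eq_fun do rewrite (psd_polarization i j (Spsd _)).2.
  apply: cvgP; apply: cvgMr_tmp; apply: cvgB; first apply: cvgD.
  - exact: cvgn_diag.
  - exact: cvgn_diag.
  - exact: cvgn_unit.
by move=> i j; rewrite /cvgC mxE /=; split; [exact: cvgn_Re | exact: cvgn_Im].
Qed.

End PsdSeries.

Section Semantics.
Variable R : realType.
Local Notation C := R[i].
Variable V : finType.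
Local Notation Op := (Op R V).

Definition trace_nonincreasing (f : Op -> Op) :=
  forall rho, is_psd rho -> is_psd (f rho) /\ \tr (f rho) <= \tr rho.

Lemma bsem_trace_nonincreasing (e : bcmd R V) : wf_bcmd e -> trace_nonincreasing (bsem e).
Proof.
case: e => [|qs|qs U|qs P] /=.
- by move=> _ rho rho_psd.
- move=> [qs_uniq _] rho rho_psd.
  by rewrite mxtrace_init //; split; [exact: init_psd |].
- move=> [[qs_uniq _] U_unitary] rho rho_psd.
  by rewrite mxtrace_unitary //; split; [exact: psd_conj |].
- move=> [[qs_uniq _] P_proj] rho rho_psd.
  by split; [exact: assert_psd | exact: mxtrace_assert_le].
Qed.

Section Loop.
Variables (qs : seq V) (P : LOp R qs) (Sb : prog R V).
Hypotheses (qs_uniq : uniq qs) (P_proj : is_projector P).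
Hypothesis Sb_nonincr : trace_nonincreasing (sem Sb).

Definition loop_iter (rho : Op) k := iter k (fun r => sem Sb (assert_sem P r)) rho.

Definition loop_exit (rho : Op) k := assert_sem (perp P) (loop_iter rho k).

Lemma psd_loop_iter rho k : is_psd rho -> is_psd (loop_iter rho k).
Proof.
by move=> rho_psd; elim: k => //= k IH; case: (Sb_nonincr (assert_psd qs_uniq P_proj IH)).
Qed.

Lemma psd_loop_exit rho k : is_psd rho -> is_psd (loop_exit rho k).
Proof. by move=> rho_psd; apply/assert_psd/psd_loop_iter => //; apply: perp_projector. Qed.

Lemma mxtrace_loop_le rho m : is_psd rho ->
  \tr (partial_sum (loop_exit rho) m) + \tr (loop_iter rho m) <= \tr rho.
Proof.
move=> rho_psd; elim: m => [|m IH]; first by rewrite /partial_sum big_ord0 mxtrace0 add0r.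
apply: le_trans IH; rewrite partial_sumS mxtraceD -addrA lerD2l.
rewrite -[X in _ <= X](mxtrace_assert_perp qs_uniq _ P_proj) addrC lerD2r.
by case: (Sb_nonincr (assert_psd qs_uniq P_proj (psd_loop_iter m rho_psd))).
Qed.

Lemma mxtrace_partial_exit_le rho m : is_psd rho ->
  \tr (partial_sum (loop_exit rho) m) <= \tr rho.
Proof.
move=> rho_psd; apply: le_trans (mxtrace_loop_le m rho_psd).
by rewrite lerDl; apply/psd_mxtrace_ge0/psd_loop_iter.
Qed.

Lemma while_hassum rho : is_psd rho ->
  op_hassum (loop_exit rho) (sem (PWhile P Sb) rho).
Proof.
move=> rho_psd; apply: (psd_series_cvg (c := \tr rho)) => [k|m].
  exact: psd_loop_exit.
exact: mxtrace_partial_exit_le.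
Qed.

Lemma while_trace_nonincreasing : trace_nonincreasing (sem (PWhile P Sb)).
Proof.
move=> rho rho_psd; have rho_sum := while_hassum rho_psd.
split; first by apply: (psd_mx_cvg rho_sum) => m; apply: psd_partial_sum => k; exact: psd_loop_exit.
apply: (cvgC_le (cvgC_mxtrace rho_sum)) => m.
exact: mxtrace_partial_exit_le.
Qed.

End Loop.

Lemma sem_trace_nonincreasing (S : prog R V) : wf_prog S -> trace_nonincreasing (sem S).
Proof.
elim: S => [e|S0 IH0 S1 IH1|qs P S1 IH1 S0 IH0|qs P Sb IH] /=.
- exact: bsem_trace_nonincreasing.
- move=> [W0 W1] rho rho_psd; have [psd0 tr0] := IH0 W0 rho rho_psd.
  by have [psd1 tr1] := IH1 W1 _ psd0; split=> //; apply: le_trans tr0.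
- move=> [[[qs_uniq _] P_proj] [W1 W0]] rho rho_psd.
  have [psd1 tr1] := IH1 W1 _ (assert_psd qs_uniq P_proj rho_psd).
  have [psd0 tr0] := IH0 W0 _ (assert_psd qs_uniq (perp_projector P_proj) rho_psd).
  split; first exact: psdD.
  by rewrite mxtraceD -(mxtrace_assert_perp qs_uniq rho P_proj) lerD.
- by move=> [[[qs_uniq _] P_proj] Wb]; apply: while_trace_nonincreasing => //; apply: IH.
Qed.

Lemma sem_dens (S : prog R V) (rho : Op) : wf_prog S -> is_dens rho -> is_dens (sem S rho).
Proof.
move=> W [rho_psd rho_tr]; have [psdS trS] := sem_trace_nonincreasing W rho_psd.
by split=> //; apply: le_trans rho_tr.
Qed.

End Semantics.

Definition guarded (R : realType) (V : finType) (qs : seq V) (P : LOp R qs)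
  (S : prog R V) : prog R V := PSeq (Basic (BAssert P)) S.

Section Unrolling.
Variable R : realType.
Variable V : finType.
Variables (qs : seq V) (P : LOp R qs) (Sb : prog R V).

Fixpoint loop_pow (k : nat) : prog R V :=
  if k is k'.+1 then PSeq (loop_pow k') (guarded P Sb) else Basic (BSkip R V).

Definition loop_exit_prog k := PSeq (loop_pow k) (Basic (BAssert (perp P))).

Lemma sem_loop_exit_prog k rho : sem (loop_exit_prog k) rho = loop_exit P Sb rho k.
Proof. by rewrite /= /loop_exit; congr assert_sem; elim: k => //= k ->. Qed.

Hypothesis W : wf_prog (PWhile P Sb).

Lemma wf_while_step : wf_prog (guarded P Sb).
Proof. by case: W. Qed.

Lemma wf_while_exit : wf_prog (Basic (BAssert (perp P))).
Proof. by case: W => [[qs_wf P_proj] _]; split=> //; apply: perp_projector. Qed.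

Lemma wf_loop_pow k : wf_prog (loop_pow k).
Proof. by elim: k => //= k IH; split=> //; apply: wf_while_step. Qed.

Lemma wf_loop_exit_prog k : wf_prog (loop_exit_prog k).
Proof. by split; [apply: wf_loop_pow | apply: wf_while_exit]. Qed.

End Unrolling.

Section IfBranches.
Variable R : realType.
Variable V : finType.
Variables (qs : seq V) (P : LOp R qs) (S1 S0 : prog R V).
Hypothesis W : wf_prog (PIf P S1 S0).

Lemma wf_if_then : wf_prog (guarded P S1).
Proof. by case: W => [[qs_wf P_proj] [W1 W0]]. Qed.

Lemma wf_if_else : wf_prog (guarded (perp P) S0).
Proof. by case: W => [[qs_wf P_proj] [W1 W0]]; split=> //; split=> //; apply: perp_projector. Qed.

End IfBranches.

Lemma sem_set_seq (R : realType) (V : finType) (S0 S1 : prog R V) X :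
  sem_set (PSeq S0 S1) X = sem_set S1 (sem_set S0 X).
Proof. by rewrite /sem_set image_comp. Qed.

Lemma sem_set_skip (R : realType) (V : finType) X : sem_set (Basic (BSkip R V)) X = X.
Proof. exact: image_id. Qed.

Section WellStructuredDomain.
Variable R : realType.
Variable V : finType.
Local Notation Op := (Op R V).
Local Notation prog := (prog R V).
Variable A : Type.
Variables (le : A -> A -> Prop) (sup : set A -> A).
Variables (alpha : set Op -> A) (gamma : A -> set Op).
Hypothesis WS : well_structured le sup alpha gamma.

Lemma lat_refl a : le a a.
Proof. by case: WS => [[]]. Qed.

Lemma lat_trans a b c : le a b -> le b c -> le a c.
Proof. by case: WS => [[_ trans _ _ _] _ _]; apply: trans. Qed.

Lemma lat_anti a b : le a b -> le b a -> a = b.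
Proof. by case: WS => [[_ _ anti _ _] _ _]; apply: anti. Qed.

Lemma sup_ub (X : set A) a : X a -> le a (sup X).
Proof. by case: WS => [[_ _ _ ub _] _ _]; apply: ub. Qed.

Lemma sup_least (X : set A) b : (forall a, X a -> le a b) -> le (sup X) b.
Proof. by case: WS => [[_ _ _ _ least] _ _]; apply: least. Qed.

Lemma join_mono a b a' b' : le a a' -> le b b' -> le (join sup a b) (join sup a' b').
Proof.
move=> aa bb; apply: sup_least => _ [->|->].
  by apply: lat_trans aa (sup_ub _); left.
by apply: lat_trans bb (sup_ub _); right.
Qed.

Lemma alpha_mono (X Y : set Op) : in_Q X -> in_Q Y -> X `<=` Y -> le (alpha X) (alpha Y).
Proof. by case: WS => [_ [mono _ _ _ _] _]; apply: mono. Qed.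

Lemma gamma_mono a b : le a b -> gamma a `<=` gamma b.
Proof. by case: WS => [_ [_ mono _ _ _] _]; apply: mono. Qed.

Lemma gamma_in_Q a : in_Q (gamma a).
Proof. by case: WS => [_ [_ _ gQ _ _] _]; apply: gQ. Qed.

Lemma galois (X : set Op) a : in_Q X -> (X `<=` gamma a <-> le (alpha X) a).
Proof. by case: WS => [_ [_ _ _ gc _] _]; apply: gc. Qed.

Lemma alphaK a : alpha (gamma a) = a.
Proof. by case: WS => [_ [_ _ _ _ ag] _]; apply: ag. Qed.

Lemma in_Q1 (x : Op) : is_dens x -> in_Q [set x].
Proof. by move=> x_dens y ->. Qed.

Lemma alpha1_le (X : set Op) x : in_Q X -> X x -> le (alpha [set x]) (alpha X).
Proof. by move=> XQ Xx; apply: alpha_mono => // [|y ->//]; apply/in_Q1/XQ. Qed.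

Lemma alpha_le_points (X : set Op) b :
  in_Q X -> (forall x, X x -> le (alpha [set x]) b) -> le (alpha X) b.
Proof.
move=> XQ Xb; apply/galois => // x Xx.
exact: (galois b (in_Q1 (XQ x Xx))).2 (Xb x Xx) x erefl.
Qed.

Lemma sem_set_in_Q (S : prog) X : wf_prog S -> in_Q X -> in_Q (sem_set S X).
Proof. by move=> W XQ _ [x Xx <-]; apply: sem_dens => //; apply: XQ. Qed.

Local Notation best := (best_abs alpha gamma).

Lemma best_mono (S : prog) a a' : wf_prog S -> le a a' -> le (best S a) (best S a').
Proof.
move=> W aa; apply: alpha_mono; try apply: sem_set_in_Q; try apply: gamma_in_Q; try done.
by move=> _ [x ax <-]; exists x => //; apply: gamma_mono aa _ ax.
Qed.

Lemma alpha_sem_family (S : prog) (F : nat -> option prog) y :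
  (forall n T, F n = Some T -> wf_prog T) -> is_dens y -> is_dens (sem S y) ->
  op_hassum (fun n => oapp (fun T => sem T y) 0 (F n)) (sem S y) ->
  alpha [set sem S y] = sup [set alpha [set sem T y] | T in [set T | exists n, F n = Some T]].
Proof.
move=> WF y_dens Sy_dens Sy_sum.
pose fam n := omap (fun T => ((1 : R), sem T y)) (F n).
have famE : fam_term fam = (fun n => oapp (fun T => sem T y) 0 (F n)).
  apply: funext => n; rewrite /fam_term /fam; case: (F n) => //= T.
  by rewrite -[(1%:C)%C]/(1 : R[i]) scale1r.
have membersE : [set rho | exists n x, fam n = Some (x, rho)] =
                [set sem T y | T in [set T | exists n, F n = Some T]].
  apply/seteqP; split => rho /=.
    by move=> [n [x]]; rewrite /fam; case E: (F n) => [T|] //= [_ <-]; exists T => //; exists n.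
  by move=> [T [n FnT] <-]; exists n, 1; rewrite /fam FnT.
case: WS => _ _ /(_ fam (sem S y)); rewrite famE membersE image_comp; apply => //.
move=> n x rho; rewrite /fam; case E: (F n) => [T|] //= [<- <-].
by split; [exact: ltr01 | apply: sem_dens (WF n T E) y_dens].
Qed.

Lemma alpha_sem_set_family (S : prog) (F : nat -> option prog) Y :
  wf_prog S -> (forall n T, F n = Some T -> wf_prog T) -> in_Q Y ->
  (forall y, is_dens y -> op_hassum (fun n => oapp (fun T => sem T y) 0 (F n)) (sem S y)) ->
  alpha (sem_set S Y) =
  sup [set alpha (sem_set T Y) | T in [set T | exists n, F n = Some T]].
Proof.
move=> WfS WF YQ Ssum.
have pointwise y : Y y -> alpha [set sem S y] =
    sup [set alpha [set sem T y] | T in [set T | exists n, F n = Some T]].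
  move=> Yy; have y_dens := YQ y Yy.
  by apply: alpha_sem_family => //; [exact: sem_dens | exact: Ssum].
apply: lat_anti.
  apply: alpha_le_points => //; first exact: sem_set_in_Q.
  move=> _ [y Yy <-]; rewrite pointwise //; apply: sup_least => // _ [T FT <-].
  apply: (@lat_trans _ (alpha (sem_set T Y))); last by apply: sup_ub; exists T.
  have [n FnT] := FT.
  by apply: alpha1_le; [apply: sem_set_in_Q => //; exact: WF FnT | exists y].
apply: sup_least => // _ [T [n FnT] <-].
apply: alpha_le_points => //; first by apply: sem_set_in_Q => //; exact: WF FnT.
move=> _ [y Yy <-]; apply: (@lat_trans _ (alpha [set sem S y])).
  by rewrite pointwise //; apply: sup_ub; exists T => //; exists n.
by apply: alpha1_le; [exact: sem_set_in_Q | exists y].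
Qed.

Lemma alpha_sem_if (qs : seq V) (P : LOp R qs) (S1 S0 : prog) Y :
  wf_prog (PIf P S1 S0) -> in_Q Y ->
  alpha (sem_set (PIf P S1 S0) Y) =
  join sup (alpha (sem_set (guarded (perp P) S0) Y)) (alpha (sem_set (guarded P S1) Y)).
Proof.
move=> W YQ.
pose F n := match n with 0 => Some (guarded (perp P) S0) | 1 => Some (guarded P S1) | _ => None end.
rewrite (@alpha_sem_set_family _ F) //.
- congr sup; apply/seteqP; split => b /=.
    by move=> [T [n FnT] <-]; case: n FnT => [|[|n]] //= [<-]; [left | right].
  by move=> [->|->]; [exists (guarded (perp P) S0) => //; exists 0%N |
                      exists (guarded P S1) => //; exists 1%N].
- move=> n T; rewrite /F; case: n => [|[|n]] // [<-].
    exact: wf_if_else W.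
  exact: wf_if_then W.
move=> y _ i j.
have sumE : \forall m \near \oo, partial_sum (fun n => oapp (fun T => sem T y) 0 (F n)) m =
                                sem (PIf P S1 S0) y.
  exists 2%N => // [[|[|m]]] // _.
  by rewrite /partial_sum !big_ord_recl big1 ?addr0 //= addrC.
by split; apply: cvg_near_cst; apply: filterS sumE => m ->.
Qed.

Lemma alpha_sem_while (qs : seq V) (P : LOp R qs) (Sb : prog) Y :
  wf_prog (PWhile P Sb) -> in_Q Y ->
  alpha (sem_set (PWhile P Sb) Y) =
  sup (range (fun k => alpha (sem_set (loop_exit_prog P Sb k) Y))).
Proof.
move=> W YQ; have [[[qs_uniq _] P_proj] Wb] := W.
rewrite (@alpha_sem_set_family _ (fun n => Some (loop_exit_prog P Sb n))) //.
- congr sup; apply/seteqP; split => b /=.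
    by move=> [T [n [<-]] <-]; exists n.
  by move=> [k _ <-]; exists (loop_exit_prog P Sb k) => //; exists k.
- by move=> n T [<-]; exact: wf_loop_exit_prog.
move=> y [y_psd _].
have -> : (fun n => oapp (fun T => sem T y) 0 (Some (loop_exit_prog P Sb n))) = loop_exit P Sb y.
  by apply: funext => n; exact: sem_loop_exit_prog.
by apply: while_hassum => //; apply: sem_trace_nonincreasing.
Qed.

Variable fsharp : bcmd R V -> A -> A.
Hypothesis fsharp_complete : forall e : bcmd R V, wf_bcmd e ->
  complete_abstraction alpha (sem_set (Basic e)) (fsharp e).

Lemma best_basic (e : bcmd R V) a : wf_bcmd e -> best (Basic e) a = fsharp e a.
Proof. by move=> We; rewrite /best_abs fsharp_complete ?alphaK //; apply: gamma_in_Q. Qed.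

Lemma complete_best_seq (S0 S1 : prog) : wf_prog S0 -> wf_prog S1 ->
  complete_abstraction alpha (sem_set S0) (best S0) ->
  complete_abstraction alpha (sem_set S1) (best S1) ->
  complete_abstraction alpha (sem_set (PSeq S0 S1)) (best (PSeq S0 S1)).
Proof.
move=> W0 W1 C0 C1 X XQ; have Q0 Z : in_Q Z -> in_Q (sem_set S0 Z) := sem_set_in_Q W0.
rewrite /best_abs !sem_set_seq.
by rewrite (C1 _ (Q0 _ XQ)) (C0 _ XQ) (C1 _ (Q0 _ (@gamma_in_Q (alpha X)))).
Qed.

Lemma complete_best_basic (e : bcmd R V) : wf_bcmd e ->
  complete_abstraction alpha (sem_set (Basic e)) (best (Basic e)).
Proof. by move=> We X XQ; rewrite best_basic ?fsharp_complete. Qed.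

Lemma complete_best_guarded (qs : seq V) (P : LOp R qs) (S : prog) :
  wf_qs qs -> is_projector P -> wf_prog S ->
  complete_abstraction alpha (sem_set S) (best S) ->
  complete_abstraction alpha (sem_set (guarded P S)) (best (guarded P S)).
Proof. by move=> qs_wf P_proj W; apply: complete_best_seq => //; apply: complete_best_basic. Qed.

Lemma complete_best (S : prog) : wf_prog S ->
  complete_abstraction alpha (sem_set S) (best S).
Proof.
elim: S => [e|S0 IH0 S1 IH1|qs P S1 IH1 S0 IH0|qs P Sb IH] /= W X XQ.
- exact: complete_best_basic.
- by case: W => W0 W1; apply: complete_best_seq => //; [apply: IH0 | apply: IH1].
- have [[qs_wf P_proj] [W1 W0]] := W.
  have Celse := complete_best_guarded qs_wf (perp_projector P_proj) W0 (IH0 W0).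
  have Cthen := complete_best_guarded qs_wf P_proj W1 (IH1 W1).
  by rewrite /best_abs !alpha_sem_if ?(Celse X XQ) ?(Cthen X XQ) //; exact: gamma_in_Q.
- have [[qs_wf P_proj] Wb] := W.
  have Cstep := complete_best_guarded qs_wf P_proj Wb (IH Wb).
  have Cexit k : complete_abstraction alpha (sem_set (loop_exit_prog P Sb k))
                                            (best (loop_exit_prog P Sb k)).
    apply: complete_best_seq (wf_loop_pow W k) (wf_while_exit W) _ (complete_best_basic _).
      elim: k => [|k IHk] /=; first by move=> Z ZQ; rewrite /best_abs !sem_set_skip alphaK.
      exact: complete_best_seq (wf_loop_pow W k) (wf_while_step W) IHk Cstep.
    exact: wf_while_exit W.
  rewrite /best_abs (alpha_sem_while W XQ) (alpha_sem_while W (@gamma_in_Q (alpha X))).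
  by congr sup; apply: eq_imagel => k _; apply: Cexit.
Qed.

Lemma best_seq (S0 S1 : prog) a : wf_prog S0 -> wf_prog S1 ->
  best (PSeq S0 S1) a = best S1 (best S0 a).
Proof.
move=> W0 W1; rewrite {1}/best_abs sem_set_seq complete_best //.
by apply: sem_set_in_Q => //; exact: gamma_in_Q.
Qed.

Lemma best_if (qs : seq V) (P : LOp R qs) (S1 S0 : prog) a : wf_prog (PIf P S1 S0) ->
  best (PIf P S1 S0) a = join sup (best (guarded (perp P) S0) a) (best (guarded P S1) a).
Proof. by move=> W; rewrite /best_abs alpha_sem_if //; exact: gamma_in_Q. Qed.

Lemma best_loop_pow (qs : seq V) (P : LOp R qs) (Sb : prog) a k :
  wf_prog (PWhile P Sb) -> best (loop_pow P Sb k) a = iter k (best (guarded P Sb)) a.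
Proof.
move=> W; elim: k => [|k IH] /=; first by rewrite /best_abs sem_set_skip alphaK.
by rewrite (best_seq _ (wf_loop_pow W k) (wf_while_step W)) IH.
Qed.

Lemma best_while (qs : seq V) (P : LOp R qs) (Sb : prog) a : wf_prog (PWhile P Sb) ->
  best (PWhile P Sb) a =
  sup (range (fun k => best (Basic (BAssert (perp P))) (iter k (best (guarded P Sb)) a))).
Proof.
move=> W; rewrite {1}/best_abs (alpha_sem_while W (@gamma_in_Q a)).
congr sup; apply: eq_imagel => k _.
by rewrite -(best_loop_pow _ _ W) -(best_seq _ (wf_loop_pow W k) (wf_while_exit W)).
Qed.

Local Notation derivable := (derivable_in le sup fsharp).

Lemma derivable_sound a (S : prog) b :
  derivable a S b -> wf_prog S -> valid_in le alpha gamma a S b.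
Proof.
rewrite /valid_in; elim=> {a S b}.
- by move=> e a We; rewrite best_basic //; apply: lat_refl.
- move=> a a' b S0 S1 _ IH0 _ IH1 [W0 W1]; rewrite best_seq //.
  exact: lat_trans (IH1 W1) (best_mono W1 (IH0 W0)).
- move=> a a' b b' S aa' _ IH bb' W.
  exact: lat_trans bb' (lat_trans (IH W) (best_mono W aa')).
- move=> a b0 b1 qs P S1 S0 _ IH1 _ IH0 W; rewrite best_if //.
  exact: join_mono (IH0 (wf_if_else W)) (IH1 (wf_if_then W)).
- move=> as_ bs qs P Sb _ IHa _ IHb W.
  have Wstep := wf_while_step W; have Wexit := wf_while_exit W.
  have as_le i : le (as_ i) (iter i (best (guarded P Sb)) (as_ 0%N)).
    elim: i => [|i IHi] /=; first exact: lat_refl.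
    exact: lat_trans (IHa i Wstep) (best_mono Wstep IHi).
  rewrite best_while //; apply: sup_least => _ [i _ <-].
  apply: lat_trans (IHb i Wexit) (lat_trans (best_mono Wexit (as_le i)) _).
  by apply: sup_ub; exists i.
Qed.

Lemma derivable_best_basic (e : bcmd R V) a : wf_bcmd e -> derivable a (Basic e) (best (Basic e) a).
Proof. by move=> We; rewrite best_basic //; apply: ExpIn. Qed.

Lemma derivable_best_seq (S0 S1 : prog) : wf_prog S0 -> wf_prog S1 ->
  (forall a, derivable a S0 (best S0 a)) -> (forall a, derivable a S1 (best S1 a)) ->
  forall a, derivable a (PSeq S0 S1) (best (PSeq S0 S1) a).
Proof. by move=> W0 W1 D0 D1 a; rewrite best_seq //; apply: SeqIn (D0 a) (D1 _). Qed.

Lemma derivable_best_guarded (qs : seq V) (P : LOp R qs) (S : prog) :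
  wf_qs qs -> is_projector P -> wf_prog S -> (forall a, derivable a S (best S a)) ->
  forall a, derivable a (guarded P S) (best (guarded P S) a).
Proof.
move=> qs_wf P_proj W; have Wassert : wf_prog (Basic (BAssert P)) by [].
exact: derivable_best_seq Wassert W (fun a => derivable_best_basic a Wassert).
Qed.

Lemma derivable_best (S : prog) : wf_prog S -> forall a, derivable a S (best S a).
Proof.
elim: S => [e|S0 IH0 S1 IH1|qs P S1 IH1 S0 IH0|qs P Sb IH] /= W a.
- exact: derivable_best_basic.
- by case: W => W0 W1; apply: derivable_best_seq => //; [apply: IH0 | apply: IH1].
- have [[qs_wf P_proj] [W1 W0]] := W.
  rewrite best_if //; apply: MeasIn.
    exact: derivable_best_guarded qs_wf P_proj W1 (IH1 W1) a.
  exact: derivable_best_guarded qs_wf (perp_projector P_proj) W0 (IH0 W0) a.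
- have [[qs_wf P_proj] Wb] := W.
  have Dstep := derivable_best_guarded qs_wf P_proj Wb (IH Wb).
  rewrite best_while //.
  exact: (WhileIn (as_ := fun k => iter k (best (guarded P Sb)) a)
                  (fun k => Dstep _) (fun k => derivable_best_basic _ (wf_while_exit W))).
Qed.

End WellStructuredDomain.

Theorem mainTheorem10 (R : realType) (V : finType) (A : Type)
    (le : A -> A -> Prop) (sup : set A -> A)
    (alpha : set (Op R V) -> A) (gamma : A -> set (Op R V))
    (fsharp : bcmd R V -> A -> A) :
  well_structured le sup alpha gamma ->
  (forall e : bcmd R V, wf_bcmd e ->
     forall a a' : A, le a a' -> le (fsharp e a) (fsharp e a')) ->
  (forall e : bcmd R V, wf_bcmd e ->
     complete_abstraction alpha (sem_set (Basic e)) (fsharp e)) ->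
  forall (a b : A) (S : prog R V), wf_prog S ->
    (derivable_in le sup fsharp a S b <-> valid_in le alpha gamma a S b).
Proof.
move=> WS _ fsharp_complete a b S W; split=> [D | valid].
  exact: derivable_sound D W.
exact: ImpIn (lat_refl WS a) (derivable_best WS fsharp_complete W a) valid.
Qed.
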